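(* Let $\theta\in\mathbb R\setminus\mathbb Q$. Then the cyclic cohomology of $\mathcal A_\theta^{alg}$ with coefficients in the twisted dual satisfies $HC^1(\mathcal A_\theta^{alg},{}_{-1}\mathcal A_\theta^{alg*})=0$ and $HC^2(\mathcal A_\theta^{alg},{}_{-1}\mathcal A_\theta^{alg*})\cong\mathbb C^4$.
   Context: Let $\lambda=e^{2\pi i\theta}$. $\mathcal A_\theta^{alg}$ is the complex algebra of finite linear combinations $\sum x_{n,m}U_1^nU_2^m$ generated by invertible $U_1,U_2$ with $U_2U_1=\lambda U_1U_2$. Its linear dual $\mathcal A_\theta^{alg*}$ is the space of formal series $\sum\varphi_{n,m}U_1^nU_2^m$. $\sigma$ is the automorphism $\sigma(U_j)=U_j^{-1}$, and ${}_{-1}\mathcal A_\theta^{alg*}$ is $\mathcal A_\theta^{alg*}$ with bimodule structure $\alpha\cdot a=\sigma(\alpha)a$, $a\cdot\alpha=a\alpha$. $HC^\bullet(\mathcal A_\theta^{alg},{}_{-1}\mathcal A_\theta^{alg*})$ denotes the $\sigma$-twisted cyclic cohomology, i.e. the cyclic cohomology fitting into Connes' $S,B,I$ long exact sequence with the Hochschild cohomology $H^\bullet(\mathcal A_\theta^{alg},{}_{-1}\mathcal A_\theta^{alg*})$. *)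

From Stdlib Require Import Reals ZArith.
Open Scope R_scope.

Record C : Type := mkC { Re : R; Im : R }.
Definition C0 : C := mkC 0 0.
Definition C1 : C := mkC 1 0.
Definition Cadd (z w : C) : C := mkC (Re z + Re w) (Im z + Im w).
Definition Copp (z : C) : C := mkC (- Re z) (- Im z).
Definition Cmul (z w : C) : C :=
  mkC (Re z * Re w - Im z * Im w) (Re z * Im w + Im z * Re w).

Fixpoint Csum (f : nat -> C) (k : nat) : C :=
  match k with O => C0 | S k' => Cadd (Csum f k') (f k') end.

Definition sgn (k : nat) : C := if Nat.even k then C1 else Copp C1.

(** * The algebra A_theta^alg on its monomial basis
    The basis element (n,m) : Z*Z stands for U1^n U2^m.
    Since U2 U1 = lambda U1 U2 we have
      U1^n U2^m * U1^p U2^q = lambda^(m p) U1^(n+p) U2^(m+q). *)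
Definition basis : Type := (Z * Z)%type.

Definition lam_pow (theta : R) (k : Z) : C :=
  mkC (cos (2 * PI * theta * IZR k)) (sin (2 * PI * theta * IZR k)).

Definition mulc (theta : R) (x y : basis) : C := lam_pow theta (snd x * fst y)%Z.
Definition mulb (x y : basis) : basis := (fst x + fst y, snd x + snd y)%Z.

Definition sig (x : basis) : basis := (- fst x, - snd x)%Z.

(** * Cochains
    Hom(A^{(x)n}, A^* ) = (A^{(x)(n+1)})^* ;  f |-> phi(a0,...,an) := f(a1..an)(a0).
    A multilinear functional is determined by its (arbitrary) values on tuples of
    basis monomials; a tuple (a0,...,an) is encoded as a : nat -> basis, and an
    n-cochain is a function that only depends on the entries 0..n. *)
Definition cochain : Type := (nat -> basis) -> C.

Definition local (n : nat) (phi : cochain) : Prop :=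
  forall a a' : nat -> basis, (forall i, (i <= n)%nat -> a i = a' i) -> phi a = phi a'.

Definition merge (i : nat) (a : nat -> basis) : nat -> basis :=
  fun j => if Nat.ltb j i then a j
           else if Nat.eqb j i then mulb (a i) (a (S i)) else a (S j).

(** With (alpha . g)(x) = g(x sigma(alpha)) and (g . alpha)(x) = g(alpha x):
    (b phi)(a0,..,a_{n+1}) = phi(a0 sigma(a1), a2, .., a_{n+1})
        + sum_{i=1}^n (-1)^i phi(a0,..,a_i a_{i+1},..,a_{n+1})
        + (-1)^{n+1} phi(a_{n+1} a0, a1, .., an). *)
Definition hoch_b (theta : R) (n : nat) (phi : cochain) : cochain :=
  fun a =>
    let t0 := Cmul (mulc theta (a O) (sig (a 1%nat)))
                   (phi (fun j => if Nat.eqb j 0 then mulb (a O) (sig (a 1%nat))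
                                  else a (S j))) in
    let mid := Csum (fun k => let i := S k in
                      Cmul (sgn i) (Cmul (mulc theta (a i) (a (S i))) (phi (merge i a)))) n in
    let tl := Cmul (sgn (S n))
                (Cmul (mulc theta (a (S n)) (a O))
                      (phi (fun j => if Nat.eqb j 0 then mulb (a (S n)) (a O) else a j))) in
    Cadd t0 (Cadd mid tl).

(** * Cyclic cochains
    Via psi(c0,..,cn) := phi(c0, sigma c1, .., sigma cn), the complex (C^*, b)
    above is identified with the standard sigma-twisted Hochschild complex
    (twist in the last term), whose cyclic cochains are those with
    psi(c0,..,cn) = (-1)^n psi(sigma(cn), c0, .., c_{n-1}). *)
Definition sigma_conj (phi : cochain) : cochain :=
  fun a => phi (fun i => if Nat.eqb i 0 then a O else sig (a i)).

Definition twisted_cyclic_std (n : nat) (psi : cochain) : Prop :=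
  forall a : nat -> basis,
    psi a = Cmul (sgn n) (psi (fun i => if Nat.eqb i 0 then sig (a n) else a (i - 1)%nat)).

Definition is_cyclic (n : nat) (phi : cochain) : Prop :=
  local n phi /\ twisted_cyclic_std n (sigma_conj phi).

Definition is_cyclic_cocycle (theta : R) (n : nat) (phi : cochain) : Prop :=
  is_cyclic n phi /\ forall a, hoch_b theta n phi a = C0.

Definition is_cyclic_coboundary (theta : R) (n : nat) (phi : cochain) : Prop :=
  exists psi, is_cyclic n psi /\ forall a, phi a = hoch_b theta n psi a.

Definition lin4 (c : nat -> C) (f : nat -> cochain) : cochain :=
  fun a => Csum (fun k => Cmul (c k) (f k a)) 4.

(** HC^{n+1} = 0 *)
Definition HC_vanishes (theta : R) (n : nat) : Prop :=
  forall phi, is_cyclic_cocycle theta (S n) phi -> is_cyclic_coboundary theta n phi.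

Definition HC_dim4 (theta : R) (n : nat) : Prop :=
  exists f : nat -> cochain,
    (forall k, (k < 4)%nat -> is_cyclic_cocycle theta (S n) (f k)) /\
    (forall phi, is_cyclic_cocycle theta (S n) phi ->
       exists c : nat -> C, is_cyclic_coboundary theta n
         (fun a => Cadd (phi a) (Copp (lin4 c f a)))) /\
    (forall c : nat -> C, is_cyclic_coboundary theta n (lin4 c f) ->
       forall k, (k < 4)%nat -> c k = C0).

From Stdlib Require Import Reals ZArith Lia Lra Ring.
Open Scope R_scope.

(** The twisted Hochschild complex is acyclic in degrees 1 and 2: since every
    monomial [x] splits as [x = r + 2k] with [r] in [{0,1}^2], a cocycle can be
    contracted by evaluating it against [sigma(k)], which gives explicit
    homotopies [contract1] and [contract2].  Hence [HC^1 = 0], and Connes'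
    periodicity map [S] identifies [HC^2] with [HC^0], the space of
    sigma-twisted traces.  A twisted trace is determined by
    its values on the four parity representatives [(0,0), (1,0), (0,1), (1,1)],
    and the four traces dual to them give the basis [S tau_r] of [HC^2]. *)

Lemma C_ext (z w : C) : Re z = Re w -> Im z = Im w -> z = w.
Proof. destruct z, w; simpl; intros -> ->; reflexivity. Qed.

Definition Csub (z w : C) : C := Cadd z (Copp w).

Lemma C_ring_theory : ring_theory C0 C1 Cadd Cmul Csub Copp (@eq C).
Proof.
  split; intros; apply C_ext; destruct_all C; unfold Csub, C0, C1; simpl; ring.
Qed.
Add Ring C_ring : C_ring_theory.

Lemma lam_pow_add t a b : Cmul (lam_pow t a) (lam_pow t b) = lam_pow t (a + b).
Proof.
  unfold lam_pow; apply C_ext; simpl; rewrite plus_IZR;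
  replace (2 * PI * t * (IZR a + IZR b)) with (2*PI*t*IZR a + 2*PI*t*IZR b) by ring.
  - rewrite cos_plus; ring.
  - rewrite sin_plus; ring.
Qed.

Lemma lam_pow_0 t : lam_pow t 0 = C1.
Proof.
  unfold lam_pow; apply C_ext; simpl; rewrite Rmult_0_r; [apply cos_0 | apply sin_0].
Qed.

Lemma Cmul_lam_pow_assoc t a b x :
  Cmul (lam_pow t a) (Cmul (lam_pow t b) x) = Cmul (lam_pow t (a + b)) x.
Proof. rewrite <- lam_pow_add; ring. Qed.

Lemma Cmul_Caddr z x y : Cmul z (Cadd x y) = Cadd (Cmul z x) (Cmul z y). Proof. ring. Qed.
Lemma Cmul_Coppr z x : Cmul z (Copp x) = Copp (Cmul z x). Proof. ring. Qed.
Lemma Cmul_C0r z : Cmul z C0 = C0. Proof. ring. Qed.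
Lemma Cmul_C1l x : Cmul C1 x = x. Proof. ring. Qed.
Lemma Cmul_Copp_C1l x : Cmul (Copp C1) x = Copp x. Proof. ring. Qed.

Lemma Ceq_of_diff (L R S : C) : Cadd L (Copp R) = S -> S = C0 -> L = R.
Proof.
  intros HS H0; rewrite H0 in HS.
  transitivity (Cadd (Cadd L (Copp R)) R); [ring | rewrite HS; ring].
Qed.

Lemma Ceq_of_diff_lincomb L R L1 R1 L2 R2 L3 R3 c1 c2 c3 :
  Cadd L (Copp R) = Cadd (Cmul c1 (Cadd L1 (Copp R1)))
                         (Cadd (Cmul c2 (Cadd L2 (Copp R2))) (Cmul c3 (Cadd L3 (Copp R3)))) ->
  L1 = R1 -> L2 = R2 -> L3 = R3 -> L = R.
Proof. intros H -> -> ->. apply (Ceq_of_diff _ _ _ H). ring. Qed.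

Notation four := (Cadd C1 (Cadd C1 (Cadd C1 C1))).
Definition quarter : C := mkC (/ 4) 0.

Lemma four_mul_eq0 z : Cmul four z = C0 -> z = C0.
Proof.
  intro H; pose proof (f_equal Re H); pose proof (f_equal Im H).
  destruct z; simpl in *; apply C_ext; simpl; lra.
Qed.

Lemma sub_quarter_mul X Y : Cadd X (Copp (Cmul quarter Y)) = Cmul quarter (Cadd (Cmul four X) (Copp Y)).
Proof. destruct X, Y; apply C_ext; unfold quarter; simpl; field. Qed.

Lemma sig_sig x : sig (sig x) = x.
Proof. destruct x; unfold sig; simpl; f_equal; ring. Qed.

Definition ev1 (phi : cochain) (x : basis) : C := phi (fun _ => x).
Definition ev2 (phi : cochain) (x y : basis) : C :=
  phi (fun j => match j with O => x | _ => y end).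
Definition ev3 (phi : cochain) (x y z : basis) : C :=
  phi (fun j => match j with O => x | 1%nat => y | _ => z end).

Lemma local0_ev1 phi (H : local 0 phi) f : phi f = ev1 phi (f O).
Proof. apply H; intros i Hi; destruct i; [reflexivity | lia]. Qed.
Lemma local1_ev2 phi (H : local 1 phi) f : phi f = ev2 phi (f O) (f 1%nat).
Proof. apply H; intros i Hi; destruct i as [|[|i]]; [reflexivity | reflexivity | lia]. Qed.
Lemma local2_ev3 phi (H : local 2 phi) f : phi f = ev3 phi (f O) (f 1%nat) (f 2%nat).
Proof. apply H; intros i Hi; destruct i as [|[|[|i]]]; try reflexivity; lia. Qed.

Lemma cyclic1_ev2 phi (Hl : local 1 phi) (Hc : twisted_cyclic_std 1 (sigma_conj phi)) x0 x1 :
  ev2 phi x0 x1 = Copp (ev2 phi x1 (sig x0)).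
Proof.
  pose proof (Hc (fun i => match i with O => x0 | _ => sig x1 end)) as H.
  unfold sigma_conj, sgn in H; simpl in H. rewrite !(local1_ev2 phi Hl) in H; simpl in H; rewrite sig_sig in H.
  rewrite H; ring.
Qed.

Lemma cyclic1_of_ev2 phi (Hl : local 1 phi)
  (H : forall x0 x1, ev2 phi x0 x1 = Copp (ev2 phi x1 (sig x0))) :
  twisted_cyclic_std 1 (sigma_conj phi).
Proof.
  intro a; unfold sigma_conj, sgn; simpl; rewrite !(local1_ev2 phi Hl); simpl.
  rewrite (H (a O)); ring.
Qed.

Lemma cyclic2_ev3 phi (Hl : local 2 phi) (Hc : twisted_cyclic_std 2 (sigma_conj phi)) x0 x1 x2 :
  ev3 phi x0 x1 x2 = ev3 phi x2 (sig x0) x1.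
Proof.
  pose proof (Hc (fun i => match i with O => x0 | 1%nat => sig x1 | _ => sig x2 end)) as H.
  unfold sigma_conj, sgn in H; simpl in H. rewrite !(local2_ev3 phi Hl) in H; simpl in H; rewrite !sig_sig in H.
  rewrite H; ring.
Qed.

Lemma cyclic2_of_ev3 phi (Hl : local 2 phi)
  (H : forall x0 x1 x2, ev3 phi x0 x1 x2 = ev3 phi x2 (sig x0) x1) :
  twisted_cyclic_std 2 (sigma_conj phi).
Proof.
  intro a; unfold sigma_conj, sgn; simpl; rewrite !(local2_ev3 phi Hl); simpl.
  rewrite (H (a O)); ring.
Qed.

Lemma cyclic0_of_ev1 phi (Hl : local 0 phi) (H : forall x, ev1 phi x = ev1 phi (sig x)) :
  twisted_cyclic_std 0 (sigma_conj phi).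
Proof.
  intro a; unfold sigma_conj, sgn; simpl; rewrite !(local0_ev1 phi Hl); simpl.
  rewrite <- H; ring.
Qed.

Ltac pair_eq := match goal with |- (_, _) = (_, _) => f_equal; ring end.

(* Identify evaluations and phases whose integer arguments agree up to [ring]. *)
Ltac unify_indices :=
  repeat match goal with
  | |- context [ev3 ?f ?x ?y ?z] => match goal with |- context [ev3 f ?x' ?y' ?z'] =>
       assert_fails (constr_eq (x, y, z) (x', y', z'));
       replace (ev3 f x' y' z') with (ev3 f x y z) by (f_equal; pair_eq) end
  | |- context [ev2 ?f ?x ?y] => match goal with |- context [ev2 f ?x' ?y'] =>
       assert_fails (constr_eq (x, y) (x', y'));
       replace (ev2 f x' y') with (ev2 f x y) by (f_equal; pair_eq) end
  | |- context [ev1 ?f ?x] => match goal with |- context [ev1 f ?x'] =>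
       assert_fails (constr_eq x x');
       replace (ev1 f x') with (ev1 f x) by (f_equal; pair_eq) end
  | |- context [lam_pow ?t ?e] =>
       assert_fails (constr_eq e 0%Z);
       replace (lam_pow t e) with (lam_pow t 0) by (f_equal; ring)
  | |- context [lam_pow ?t ?e] => match goal with |- context [lam_pow t ?e'] =>
       assert_fails (constr_eq e e');
       replace (lam_pow t e') with (lam_pow t e) by (f_equal; ring) end
  end.

Ltac cexpand :=
  repeat rewrite ?Cmul_Caddr, ?Cmul_Coppr, ?Cmul_C0r, ?Cmul_C1l, ?Cmul_Copp_C1l, ?Cmul_lam_pow_assoc.
Ltac cexpand_in H :=
  repeat rewrite ?Cmul_Caddr, ?Cmul_Coppr, ?Cmul_C0r, ?Cmul_C1l, ?Cmul_Copp_C1l, ?Cmul_lam_pow_assoc in H.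
Ltac scale_hyp t H e := apply (f_equal (Cmul (lam_pow t e))) in H; cexpand_in H.

(* Close [L = R] from [H : S = C0] when [L - R] is [S] or [- S] up to [ring]. *)
Ltac close_with H :=
  rewrite ?lam_pow_0, ?Cmul_C1l; rewrite ?lam_pow_0, ?Cmul_C1l in H;
  match type of H with ?S = C0 =>
    first [ apply (Ceq_of_diff _ _ S); [ring | exact H]
          | apply (Ceq_of_diff _ _ (Copp S)); [ring | rewrite H; ring] ] end.

(* Rescale [H] by a phase so that a term [lam_pow t e * X] of the goal and of [H]
   carry the same phase, then close. *)
Ltac match_phase_and_close H :=
  match goal with |- context [Cmul (lam_pow ?t ?e) ?X] =>
    match type of H with context [Cmul (lam_pow t ?e') X] =>
      scale_hyp t H (e - e')%Z end end;
  revert H; unify_indices; intro H; close_with H.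

Ltac combine c1 H1 c2 H2 c3 H3 :=
  match type of H1 with ?L1 = ?R1 => match type of H2 with ?L2 = ?R2 =>
  match type of H3 with ?L3 = ?R3 =>
    apply (Ceq_of_diff_lincomb _ _ L1 R1 L2 R2 L3 R3 c1 c2 c3);
    [ring | exact H1 | exact H2 | exact H3]
  end end end.

Lemma div2_shift (x y a : Z) : x = (y - 2 * a)%Z -> (x / 2 = y / 2 - a)%Z.
Proof.
  intros ->. replace (y - 2 * a)%Z with (y + (- a) * 2)%Z by ring.
  rewrite Z.div_add by lia; ring.
Qed.

Lemma mod2_shift (x y a : Z) : x = (y - 2 * a)%Z -> (x mod 2 = y mod 2)%Z.
Proof.
  intros ->. replace (y - 2 * a)%Z with (y + (- a) * 2)%Z by ring.
  apply Z_mod_plus; lia.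
Qed.

Definition half (y : basis) : basis := (fst y / 2, snd y / 2)%Z.
Definition contract_phase (a0 k : basis) : Z := (fst k * snd k - snd a0 * fst k)%Z.

Section TwistedComplex.
Variable theta : R.

(* Both terms of [b (contract1 phi) (a0, a1)] involve [half (a1 a0)], because
   [half (a0 sigma(a1)) = half (a1 a0) - a1]; they match the terms of the cocycle
   identity of [phi] at [(a0 sigma(k), sigma(k), a1)] with [k = half (a1 a0)].
   The same works one degree higher for [contract2]. *)
Definition contract1 (phi : cochain) : cochain := fun a =>
  Cmul (lam_pow theta (contract_phase (a O) (half (a O))))
       (phi (fun j => match j with O => mulb (a O) (sig (half (a O)))
                              | _ => sig (half (a O)) end)).

Definition contract2 (phi : cochain) : cochain := fun a =>
  let k := half (mulb (a O) (a 1%nat)) in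
  Cmul (lam_pow theta (contract_phase (a O) k))
       (phi (fun j => match j with O => mulb (a O) (sig k) | 1%nat => sig k
                              | _ => a 1%nat end)).

Lemma contract1_local phi : local 0 (contract1 phi).
Proof. intros a a' H; unfold contract1; rewrite (H O) by lia; reflexivity. Qed.
Lemma contract2_local phi : local 1 (contract2 phi).
Proof. intros a a' H; unfold contract2; rewrite (H O), (H 1%nat) by lia; reflexivity. Qed.

Lemma b_contract1 phi (Hl : local 1 phi) (Hb : forall a, hoch_b theta 1 phi a = C0) a :
  hoch_b theta 0 (contract1 phi) a = phi a.
Proof.
  pose (k := half (mulb (a 1%nat) (a O))).
  pose proof (Hb (fun j => match j with O => mulb (a O) (sig k) | 1%nat => sig k
                               | _ => a 1%nat end)) as H.
  revert H; subst k.
  unfold hoch_b, contract1, mulc, sgn, merge; simpl Csum; simpl Nat.even; cbv iota beta.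
  rewrite !(local1_ev2 phi Hl); simpl.
  destruct (a O) as [p0 q0]; destruct (a 1%nat) as [p1 q1].
  unfold half, mulb, sig; simpl.
  rewrite (div2_shift (p0 + - p1) (p1 + p0) p1) by ring.
  rewrite (div2_shift (q0 + - q1) (q1 + q0) q1) by ring.
  set (k1 := ((p1 + p0) / 2)%Z); set (k2 := ((q1 + q0) / 2)%Z).
  unfold contract_phase; simpl.
  cexpand; intros H.
  scale_hyp theta H (- ((q0 + - k2) * - - k1))%Z.
  revert H; unify_indices; intro H.
  close_with H.
Qed.

Lemma b_contract2 phi (Hl : local 2 phi) (Hb : forall a, hoch_b theta 2 phi a = C0) a :
  hoch_b theta 1 (contract2 phi) a = phi a.
Proof.
  pose (k := half (mulb (mulb (a O) (a 1%nat)) (a 2%nat))).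
  pose proof (Hb (fun j => match j with O => mulb (a O) (sig k) | 1%nat => sig k
                               | 2%nat => a 1%nat | _ => a 2%nat end)) as H.
  revert H; subst k.
  unfold hoch_b, contract2, mulc, sgn, merge; simpl Csum; simpl Nat.even; cbv iota beta.
  rewrite !(local2_ev3 phi Hl); simpl.
  destruct (a O) as [p0 q0]; destruct (a 1%nat) as [p1 q1]; destruct (a 2%nat) as [p2 q2].
  unfold half, mulb, sig; simpl.
  rewrite (div2_shift (p0 + - p1 + p2) (p0 + p1 + p2) p1) by ring.
  rewrite (div2_shift (q0 + - q1 + q2) (q0 + q1 + q2) q1) by ring.
  replace (p0 + (p1 + p2))%Z with (p0 + p1 + p2)%Z by ring.
  replace (q0 + (q1 + q2))%Z with (q0 + q1 + q2)%Z by ring.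
  replace (p2 + p0 + p1)%Z with (p0 + p1 + p2)%Z by ring.
  replace (q2 + q0 + q1)%Z with (q0 + q1 + q2)%Z by ring.
  set (k1 := ((p0 + p1 + p2) / 2)%Z); set (k2 := ((q0 + q1 + q2) / 2)%Z).
  unfold contract_phase; simpl.
  cexpand; intros H.
  scale_hyp theta H (- ((q0 + - k2) * - - k1))%Z.
  revert H; unify_indices; intro H.
  close_with H.
Qed.

Lemma HC1_vanishes : HC_vanishes theta 0.
Proof.
  intros phi [[Hl Hc] Hb]. exists (contract1 phi). split; [split |].
  - apply contract1_local.
  - apply cyclic0_of_ev1; [apply contract1_local |]. intro x.
    pose proof (b_contract1 phi Hl Hb (fun j => match j with O => (0,0)%Z | _ => sig x end)) as E1.
    pose proof (b_contract1 phi Hl Hb (fun j => match j with O => sig x | _ => (0,0)%Z end)) as E2.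
    pose proof (cyclic1_ev2 phi Hl Hc (0,0)%Z (sig x)) as E3.
    unfold hoch_b, mulc, sgn in E1, E2; simpl in E1, E2.
    rewrite !(local0_ev1 _ (contract1_local phi)), !(local1_ev2 phi Hl) in E1, E2.
    simpl in *.
    destruct x as [p q]; unfold mulb, sig in *; simpl in *.
    cexpand_in E1; cexpand_in E2.
    revert E1 E2 E3; unify_indices; intros E1 E2 E3.
    rewrite ?lam_pow_0, ?Cmul_C1l in *.
    combine C1 E1 C1 E2 C1 E3.
  - intro a; symmetry; apply b_contract1; assumption.
Qed.

Definition cochain0 (g : basis -> C) : cochain := fun a => g (a O).

Lemma cochain0_local g : local 0 (cochain0 g).
Proof. intros a a' H; unfold cochain0; rewrite (H O) by lia; reflexivity. Qed.

Definition twisted_trace (chi : cochain) : Prop :=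
  local 0 chi /\ forall a, hoch_b theta 0 chi a = C0.

(* The twisted trace supported on the class [r] mod 2, normalised by
   [parity_trace r r = 1]; writing [y = r + 2k], the trace identity at
   [(r + k, k)] forces the phase. *)
Definition parity_trace (r y : basis) : C :=
  if (Z.eqb (fst y mod 2) (fst r) && Z.eqb (snd y mod 2) (snd r))%bool
  then lam_pow theta (- (fst r * snd (half y) + snd r * fst (half y)
                         + 2 * fst (half y) * snd (half y)))%Z
  else C0.

Definition parity_rep (k : nat) : basis :=
  match k with O => (0,0)%Z | 1%nat => (1,0)%Z | 2%nat => (0,1)%Z | _ => (1,1)%Z end.

Lemma parity_trace_rep j k : (j < 4)%nat -> (k < 4)%nat ->
  parity_trace (parity_rep j) (parity_rep k) = if Nat.eqb j k then C1 else C0.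
Proof.
  intros Hj Hk.
  destruct j as [|[|[|[|j]]]]; try lia; destruct k as [|[|[|[|k]]]]; try lia;
  unfold parity_trace, parity_rep, half; simpl; rewrite ?lam_pow_0; reflexivity.
Qed.

(* Stop [simpl] from unfolding symbolic integer products into binary arithmetic. *)
Arguments Z.mul : simpl never.

Lemma parity_trace_twisted_trace r : twisted_trace (cochain0 (parity_trace r)).
Proof.
  split; [apply cochain0_local |]. intro a.
  unfold hoch_b, mulc, sgn, cochain0, parity_trace, half; simpl.
  destruct (a O) as [p0 q0], (a 1%nat) as [p1 q1], r as [r1 r2].
  unfold mulb, sig; simpl.
  rewrite (mod2_shift (p0 + - p1) (p1 + p0) p1) by ring.
  rewrite (mod2_shift (q0 + - q1) (q1 + q0) q1) by ring.
  rewrite (div2_shift (p0 + - p1) (p1 + p0) p1) by ring.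
  rewrite (div2_shift (q0 + - q1) (q1 + q0) q1) by ring.
  destruct (Z.eqb ((p1 + p0) mod 2) r1 && Z.eqb ((q1 + q0) mod 2) r2)%bool eqn:E; [| ring].
  apply andb_prop in E; destruct E as [E1 E2]; apply Z.eqb_eq in E1, E2.
  pose proof (Z_div_mod_eq_full (p1 + p0) 2) as D1.
  pose proof (Z_div_mod_eq_full (q1 + q0) 2) as D2.
  set (m1 := ((p1 + p0) / 2)%Z) in *; set (m2 := ((q1 + q0) / 2)%Z) in *.
  clearbody m1 m2.
  assert (p0 = 2 * m1 + r1 - p1)%Z by lia; assert (q0 = 2 * m2 + r2 - q1)%Z by lia.
  subst p0 q0.
  rewrite ?lam_pow_add; unify_indices; ring.
Qed.

Definition parity_trace_comb (c : nat -> C) : cochain := fun a =>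
  Csum (fun k => Cmul (c k) (parity_trace (parity_rep k) (a O))) 4.

Lemma parity_trace_comb_twisted_trace c : twisted_trace (parity_trace_comb c).
Proof.
  split; [intros a a' H; unfold parity_trace_comb; rewrite (H O) by lia; reflexivity |].
  intro a.
  transitivity (Cadd (Cmul (c 0%nat) (hoch_b theta 0 (cochain0 (parity_trace (parity_rep 0))) a))
               (Cadd (Cmul (c 1%nat) (hoch_b theta 0 (cochain0 (parity_trace (parity_rep 1))) a))
               (Cadd (Cmul (c 2%nat) (hoch_b theta 0 (cochain0 (parity_trace (parity_rep 2))) a))
                     (Cmul (c 3%nat) (hoch_b theta 0 (cochain0 (parity_trace (parity_rep 3))) a))))).
  - unfold hoch_b, parity_trace_comb, cochain0; simpl; ring.
  - rewrite !(fun r => proj2 (parity_trace_twisted_trace r) a); ring.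
Qed.

Ltac trace_identity chi Hl Htr x y :=
  let H := fresh "Tr" in
  pose proof (Htr (fun j => match j with O => x | _ => y end)) as H;
  unfold hoch_b, mulc, sgn in H; simpl in H; rewrite ?(local0_ev1 chi Hl) in H; simpl in H.

Lemma twisted_trace_decomp chi (Ht : twisted_trace chi) y :
  ev1 chi y = Csum (fun k => Cmul (parity_trace (parity_rep k) y) (ev1 chi (parity_rep k))) 4.
Proof.
  destruct Ht as [Hl Htr]; destruct y as [y1 y2].
  pose proof (Z_div_mod_eq_full y1 2) as D1; pose proof (Z_div_mod_eq_full y2 2) as D2.
  pose proof (Z.mod_pos_bound y1 2 ltac:(lia)) as B1.
  pose proof (Z.mod_pos_bound y2 2 ltac:(lia)) as B2.
  trace_identity chi Hl Htr ((y1 mod 2) + y1 / 2, (y2 mod 2) + y2 / 2)%Z (y1 / 2, y2 / 2)%Z.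
  unfold Csum, parity_trace, half, parity_rep; cbn [fst snd].
  set (m1 := (y1 / 2)%Z) in *; set (m2 := (y2 / 2)%Z) in *.
  set (r1 := (y1 mod 2)%Z) in *; set (r2 := (y2 mod 2)%Z) in *.
  clearbody m1 m2 r1 r2; subst y1 y2.
  unfold mulb, sig in *; simpl in *.
  assert (r1 = 0 \/ r1 = 1)%Z as [-> | ->] by lia;
  assert (r2 = 0 \/ r2 = 1)%Z as [-> | ->] by lia;
  simpl; cexpand_in Tr; revert Tr; unify_indices; intro Tr; match_phase_and_close Tr.
Qed.

Lemma twisted_trace_sig chi (Ht : twisted_trace chi) x : ev1 chi (sig x) = ev1 chi x.
Proof.
  destruct Ht as [Hl Htr].
  trace_identity chi Hl Htr (0,0)%Z x.
  destruct x as [p q]; unfold mulb, sig in *; simpl in *.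
  cexpand_in Tr; revert Tr; unify_indices; intro Tr; rewrite ?lam_pow_0, ?Cmul_C1l in *.
  combine C1 Tr C0 (@eq_refl C C0) C0 (@eq_refl C C0).
Qed.

(* Connes' periodicity map [S : HC^0 -> HC^2] on twisted traces, and the
   1-cochain whose Hochschild coboundary it is. *)
Definition Sop (chi : cochain) : cochain := fun a =>
  Cmul (mulc theta (a O) (sig (a 1%nat)))
       (Cmul (mulc theta (mulb (a O) (sig (a 1%nat))) (sig (a 2%nat)))
             (chi (fun _ => mulb (mulb (a O) (sig (a 1%nat))) (sig (a 2%nat))))).

Definition Sop_primitive (chi : cochain) : cochain := fun a =>
  Cmul (mulc theta (a O) (sig (a 1%nat))) (chi (fun _ => mulb (a O) (sig (a 1%nat)))).

Lemma Sop_local chi : local 2 (Sop chi).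
Proof. intros a a' H; unfold Sop; rewrite (H O), (H 1%nat), (H 2%nat) by lia; reflexivity. Qed.
Lemma Sop_primitive_local chi : local 1 (Sop_primitive chi).
Proof. intros a a' H; unfold Sop_primitive; rewrite (H O), (H 1%nat) by lia; reflexivity. Qed.

Lemma Sop_cyclic chi (Ht : twisted_trace chi) x0 x1 x2 :
  ev3 (Sop chi) x0 x1 x2 = ev3 (Sop chi) x2 (sig x0) x1.
Proof.
  destruct Ht as [Hl Htr].
  trace_identity chi Hl Htr (mulb x0 (sig x1)) x2.
  unfold ev3, Sop, mulc; simpl; rewrite !(local0_ev1 chi Hl).
  destruct x0 as [p0 q0], x1 as [p1 q1], x2 as [p2 q2]; unfold mulb, sig in *; simpl in *.
  cexpand; cexpand_in Tr.
  revert Tr; unify_indices; intro Tr; match_phase_and_close Tr.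
Qed.

Lemma Sop_cocycle chi (Ht : twisted_trace chi) a : hoch_b theta 2 (Sop chi) a = C0.
Proof.
  destruct Ht as [Hl Htr].
  trace_identity chi Hl Htr (mulb (mulb (a O) (sig (a 1%nat))) (sig (a 2%nat))) (a 3%nat).
  unfold hoch_b, Sop, mulc, sgn, merge; simpl; rewrite !(local0_ev1 chi Hl); simpl.
  destruct (a O) as [p0 q0], (a 1%nat) as [p1 q1], (a 2%nat) as [p2 q2], (a 3%nat) as [p3 q3].
  unfold mulb, sig in *; simpl in *.
  cexpand; cexpand_in Tr.
  revert Tr; unify_indices; intro Tr; match_phase_and_close Tr.
Qed.

Lemma Sop_cyclic_cocycle chi : twisted_trace chi -> is_cyclic_cocycle theta 2 (Sop chi).
Proof.
  intro Ht; split; [split |].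
  - apply Sop_local.
  - apply cyclic2_of_ev3; [apply Sop_local | apply Sop_cyclic, Ht].
  - apply Sop_cocycle, Ht.
Qed.

Lemma b_Sop_primitive chi (Ht : twisted_trace chi) a :
  hoch_b theta 1 (Sop_primitive chi) a = Sop chi a.
Proof.
  destruct Ht as [Hl Htr].
  trace_identity chi Hl Htr (mulb (a O) (sig (a 1%nat))) (a 2%nat).
  unfold hoch_b, Sop, Sop_primitive, mulc, sgn, merge; simpl; rewrite !(local0_ev1 chi Hl); simpl.
  destruct (a O) as [p0 q0], (a 1%nat) as [p1 q1], (a 2%nat) as [p2 q2].
  unfold mulb, sig in *; simpl in *.
  cexpand; cexpand_in Tr.
  revert Tr; unify_indices; intro Tr; match_phase_and_close Tr.
Qed.

Lemma hoch_b1_b0 M (Hl : local 0 M) a : hoch_b theta 1 (hoch_b theta 0 M) a = C0.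
Proof.
  unfold hoch_b, mulc, sgn, merge; simpl; rewrite !(local0_ev1 M Hl); simpl.
  destruct (a O) as [p0 q0], (a 1%nat) as [p1 q1], (a 2%nat) as [p2 q2].
  unfold mulb, sig in *; simpl in *.
  cexpand; unify_indices; ring.
Qed.

Lemma hoch_b1_add (f g : cochain) a :
  hoch_b theta 1 (fun a => Cadd (f a) (g a)) a = Cadd (hoch_b theta 1 f a) (hoch_b theta 1 g a).
Proof. unfold hoch_b; simpl; ring. Qed.

Lemma hoch_b1_sub (f g : cochain) a :
  hoch_b theta 1 (fun a => Cadd (f a) (Copp (g a))) a
  = Cadd (hoch_b theta 1 f a) (Copp (hoch_b theta 1 g a)).
Proof. unfold hoch_b; simpl; ring. Qed.

Lemma hoch_b1_scale (c : C) (f : cochain) a :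
  hoch_b theta 1 (fun a => Cmul c (f a)) a = Cmul c (hoch_b theta 1 f a).
Proof. unfold hoch_b; simpl; ring. Qed.

Section CyclicTwoCocycle.
Variable phi : cochain.
Hypothesis phi_local : local 2 phi.
Hypothesis phi_cyclic : twisted_cyclic_std 2 (sigma_conj phi).
Hypothesis phi_cocycle : forall a, hoch_b theta 2 phi a = C0.

Definition contract2_sym : cochain := fun a =>
  Cadd (contract2 phi a)
       (contract2 phi (fun j => match j with O => a 1%nat | _ => sig (a O) end)).

Definition trace_part : cochain := fun a =>
  Cadd (ev2 contract2_sym (0,0)%Z (sig (a O))) (ev2 contract2_sym (0,0)%Z (a O)).

Definition trace_correction : cochain := fun a =>
  Cadd (Cadd (ev2 (contract2 phi) (0,0)%Z (sig (a O))) (ev2 (contract2 phi) (sig (a O)) (0,0)%Z))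
       (Copp (Cadd (ev2 (contract2 phi) (0,0)%Z (a O)) (ev2 (contract2 phi) (a O) (0,0)%Z))).

Definition primitive4 : cochain := fun a =>
  Cadd (Cmul four (contract2 phi a))
       (Copp (Cadd (Sop_primitive trace_part a) (hoch_b theta 0 trace_correction a))).

Lemma trace_part_local : local 0 trace_part.
Proof. intros a a' H; unfold trace_part; rewrite (H O) by lia; reflexivity. Qed.
Lemma trace_correction_local : local 0 trace_correction.
Proof. intros a a' H; unfold trace_correction; rewrite (H O) by lia; reflexivity. Qed.

Lemma ev2_contract2_sym x0 x1 :
  ev2 contract2_sym x0 x1 = Cadd (ev2 (contract2 phi) x0 x1) (ev2 (contract2 phi) x1 (sig x0)).
Proof. unfold ev2 at 1, contract2_sym; rewrite !(local1_ev2 _ (contract2_local phi)); reflexivity. Qed.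

Ltac b_contract2_at a :=
  let H := fresh "E" in
  pose proof (b_contract2 phi phi_local phi_cocycle a) as H;
  unfold hoch_b, mulc, sgn, merge in H; simpl in H;
  rewrite ?(local1_ev2 _ (contract2_local phi)), ?(local2_ev3 phi phi_local) in H; simpl in H.

Lemma contract2_sym_translate x0 x1 :
  ev2 contract2_sym x0 x1
  = Cmul (lam_pow theta (snd x0 * - fst x1)) (ev2 contract2_sym (0,0)%Z (mulb x1 (sig x0))).
Proof.
  b_contract2_at (fun j => match j with O => (0,0)%Z | 1%nat => sig x0 | _ => x1 end).
  b_contract2_at (fun j => match j with O => x1 | 1%nat => (0,0)%Z | _ => sig x0 end).
  pose proof (cyclic2_ev3 phi phi_local phi_cyclic (0,0)%Z (sig x0) x1) as E3.
  rewrite !ev2_contract2_sym.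
  destruct x0 as [p0 q0], x1 as [p1 q1]; unfold mulb, sig in *; simpl in *.
  cexpand; cexpand_in E; cexpand_in E0.
  revert E E0 E3; unify_indices; intros E E0 E3; rewrite ?lam_pow_0, ?Cmul_C1l in *.
  combine C1 E (Copp C1) E0 C1 E3.
Qed.

(* The four terms of [b trace_part] are translates of [contract2_sym] values
   that cancel pairwise. *)
Lemma trace_part_twisted_trace : twisted_trace trace_part.
Proof.
  split; [apply trace_part_local |]. intro a.
  assert (Cancel :
    Cadd (Cadd (ev2 contract2_sym (a O) (sig (a 1%nat)))
               (Copp (ev2 contract2_sym (sig (a 1%nat)) (sig (a O)))))
         (Cadd (ev2 contract2_sym (sig (a O)) (a 1%nat))
               (Copp (ev2 contract2_sym (a 1%nat) (a O)))) = C0).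
  { rewrite !ev2_contract2_sym, !sig_sig; ring. }
  rewrite (contract2_sym_translate (a O)), (contract2_sym_translate (sig (a 1%nat))),
          (contract2_sym_translate (sig (a O))), (contract2_sym_translate (a 1%nat)) in Cancel.
  unfold hoch_b, mulc, sgn; simpl; rewrite !(local0_ev1 _ trace_part_local).
  unfold ev1, trace_part.
  destruct (a O) as [p0 q0], (a 1%nat) as [p1 q1]; unfold mulb, sig in *; simpl in *.
  cexpand; cexpand_in Cancel.
  revert Cancel; unify_indices; intro Cancel; match_phase_and_close Cancel.
Qed.

Lemma primitive4_local : local 1 primitive4.
Proof.
  intros a a' H; unfold primitive4, hoch_b, mulc, sgn; simpl.
  rewrite !(local1_ev2 _ (contract2_local phi)), !(local1_ev2 _ (Sop_primitive_local trace_part)),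
          !(local0_ev1 _ trace_correction_local); simpl.
  rewrite (H O), (H 1%nat) by lia; reflexivity.
Qed.

Lemma primitive4_cyclic x0 x1 : ev2 primitive4 x0 x1 = Copp (ev2 primitive4 x1 (sig x0)).
Proof.
  pose proof (contract2_sym_translate x0 x1) as E1.
  pose proof (proj2 trace_part_twisted_trace (fun j => match j with O => x0 | _ => x1 end)) as E2.
  unfold hoch_b, mulc, sgn in E2; simpl in E2; rewrite !(local0_ev1 _ trace_part_local) in E2.
  unfold ev2 at 1 2, primitive4, hoch_b, Sop_primitive, mulc, sgn; simpl.
  rewrite !(local1_ev2 _ (contract2_local phi)), !(local0_ev1 _ trace_part_local),
          !(local0_ev1 _ trace_correction_local); simpl.
  unfold ev1, trace_part, trace_correction in *; rewrite !ev2_contract2_sym in *.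
  destruct x0 as [p0 q0], x1 as [p1 q1]; unfold mulb, sig in *; simpl in *.
  cexpand; cexpand_in E1; cexpand_in E2.
  revert E1 E2; unify_indices; intros E1 E2; rewrite ?lam_pow_0, ?Cmul_C1l in *.
  combine constr:(four) E1 C1 E2 C0 (@eq_refl C C0).
Qed.

Lemma b_primitive4 a :
  hoch_b theta 1 primitive4 a = Cadd (Cmul four (phi a)) (Copp (Sop trace_part a)).
Proof.
  unfold primitive4.
  rewrite hoch_b1_sub, hoch_b1_scale, hoch_b1_add.
  rewrite (b_contract2 phi phi_local phi_cocycle), (b_Sop_primitive _ trace_part_twisted_trace),
          (hoch_b1_b0 _ trace_correction_local).
  ring.
Qed.

Lemma cyclic2_cocycle_mod_Sop :
  is_cyclic_coboundary theta 1
    (fun a => Cadd (phi a) (Copp (Cmul quarter (Sop trace_part a)))).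
Proof.
  assert (Hl : local 1 (fun a => Cmul quarter (primitive4 a))).
  { intros a a' H; rewrite (primitive4_local a a' H); reflexivity. }
  exists (fun a => Cmul quarter (primitive4 a)); split; [split |].
  - exact Hl.
  - apply cyclic1_of_ev2; [exact Hl |]. intros x0 x1.
    change (Cmul quarter (ev2 primitive4 x0 x1)
            = Copp (Cmul quarter (ev2 primitive4 x1 (sig x0)))).
    rewrite primitive4_cyclic; ring.
  - intro a; rewrite hoch_b1_scale, b_primitive4, sub_quarter_mul; reflexivity.
Qed.

End CyclicTwoCocycle.

Definition parity_cocycle (k : nat) : cochain := Sop (cochain0 (parity_trace (parity_rep k))).

Lemma lin4_parity_cocycle c a : lin4 c parity_cocycle a = Sop (parity_trace_comb c) a.
Proof. unfold lin4, parity_cocycle, Sop, parity_trace_comb, cochain0; simpl; ring. Qed.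

Lemma Sop_parity_decomp chi (Ht : twisted_trace chi) a :
  Sop chi a = lin4 (fun k => ev1 chi (parity_rep k)) parity_cocycle a.
Proof.
  unfold Sop at 1.
  change (chi (fun _ => mulb (mulb (a O) (sig (a 1%nat))) (sig (a 2%nat))))
    with (ev1 chi (mulb (mulb (a O) (sig (a 1%nat))) (sig (a 2%nat)))).
  rewrite (twisted_trace_decomp chi Ht).
  unfold lin4, parity_cocycle, Sop, cochain0; simpl; ring.
Qed.

(* If [S tau_c = b chi] with [chi] cyclic, then [D := chi - Sop_primitive tau_c] is a
   Hochschild 1-cocycle, so [D = b (contract1 D)].  Cyclicity of [chi] then gives
   [2 tau_c(x) = h(sigma x) - h(x)] with [h := contract1 D]; the right side is odd and
   [tau_c] even under [sigma], so [tau_c = 0]. *)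
Lemma parity_trace_comb_of_coboundary c chi (Hl : local 1 chi)
  (Hc : twisted_cyclic_std 1 (sigma_conj chi))
  (Hcob : forall a, Sop (parity_trace_comb c) a = hoch_b theta 1 chi a) x :
  ev1 (parity_trace_comb c) x = C0.
Proof.
  pose proof (parity_trace_comb_twisted_trace c) as Ht.
  set (tau := parity_trace_comb c) in *.
  set (D := fun a => Cadd (chi a) (Copp (Sop_primitive tau a))).
  assert (HlD : local 1 D).
  { intros a a' E; unfold D; rewrite (Hl a a' E), (Sop_primitive_local tau a a' E); reflexivity. }
  assert (HbD : forall a, hoch_b theta 1 D a = C0).
  { intro a; unfold D; rewrite hoch_b1_sub, <- Hcob, (b_Sop_primitive tau Ht); ring. }
  assert (DE : forall a, D a = Cadd (chi a) (Copp (Sop_primitive tau a))) by reflexivity.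
  clearbody D.
  assert (Odd : forall x, Cadd (ev1 tau x) (ev1 tau x)
                          = Cadd (ev1 (contract1 D) (sig x)) (Copp (ev1 (contract1 D) x))).
  { clear x; intro x.
    pose proof (b_contract1 D HlD HbD (fun j => match j with O => x | _ => (0,0)%Z end)) as E1.
    pose proof (b_contract1 D HlD HbD (fun j => match j with O => (0,0)%Z | _ => sig x end)) as E2.
    pose proof (cyclic1_ev2 chi Hl Hc x (0,0)%Z) as E3.
    unfold hoch_b, mulc, sgn in E1, E2; simpl in E1, E2.
    rewrite !(local0_ev1 _ (contract1_local D)) in E1, E2.
    rewrite !DE in E1, E2; unfold Sop_primitive, mulc in E1, E2.
    rewrite !(local1_ev2 chi Hl), !(local0_ev1 _ (proj1 Ht)) in E1, E2; simpl in *.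
    destruct x as [p q]; unfold mulb, sig in *; simpl in *.
    cexpand_in E1; cexpand_in E2.
    revert E1 E2 E3; unify_indices; intros E1 E2 E3; rewrite ?lam_pow_0, ?Cmul_C1l in *.
    combine C1 E1 C1 E2 C1 E3. }
  apply four_mul_eq0.
  pose proof (Odd x) as O1; pose proof (Odd (sig x)) as O2; rewrite sig_sig in O2.
  pose proof (twisted_trace_sig tau Ht x) as Even.
  combine C1 O1 C1 O2 (Copp (Cadd C1 C1)) Even.
Qed.

Lemma parity_cocycles_independent c :
  is_cyclic_coboundary theta 1 (lin4 c parity_cocycle) -> forall k, (k < 4)%nat -> c k = C0.
Proof.
  intros [chi [[Hl Hc] Hcob]] k Hk.
  assert (Hz := parity_trace_comb_of_coboundary c chi Hl Hc
                  (fun a => eq_trans (eq_sym (lin4_parity_cocycle c a)) (Hcob a)) (parity_rep k)).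
  unfold ev1, parity_trace_comb in Hz; cbn [Csum] in Hz.
  rewrite !parity_trace_rep in Hz by lia.
  destruct k as [|[|[|[|k]]]]; try lia; simpl in Hz; rewrite <- Hz; ring.
Qed.

Theorem HC2_dim4 : HC_dim4 theta 1.
Proof.
  exists parity_cocycle; split; [| split].
  - intros k _; apply Sop_cyclic_cocycle, parity_trace_twisted_trace.
  - intros phi [[Hl Hc] Hb].
    exists (fun k => Cmul quarter (ev1 (trace_part phi) (parity_rep k))).
    destruct (cyclic2_cocycle_mod_Sop phi Hl Hc Hb) as [psi [Hpsi Hcob]].
    exists psi; split; [exact Hpsi |]. intro a.
    rewrite <- Hcob, (Sop_parity_decomp _ (trace_part_twisted_trace phi Hl Hc Hb)).
    unfold lin4; simpl; ring.
  - exact parity_cocycles_independent.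
Qed.

End TwistedComplex.

Theorem mainTheorem11 (theta : R)
  (Hirr : forall p q : Z, q <> 0%Z -> theta * IZR q <> IZR p) :
  HC_vanishes theta 0 /\ HC_dim4 theta 1.
Proof. split; [apply HC1_vanishes | apply HC2_dim4]. Qed.
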